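(* Let $\Phi$ be a dictionary with coherence $\mu$ and Babel function $\mu_1$, let $m\ge1$ with $m<\tfrac12(\mu^{-1}+1)$, and let $y=\Phi x^*$ be an $m$-sparse signal with $\|x^*\|_0\le m$. Let $\beta>0$ with $\|x^*\|_1<\beta$. Then there exists an integer $K$ such that for all iterations $k\ge K$ of the Frank-Wolfe algorithm for Problem (P$_\beta$), $$\|r_{k+1}\|_2^2\le(1-\theta)\,\|r_k\|_2^2,\qquad \theta=\frac{1}{16}\cdot\frac{1-\mu_1(m-1)}{m}\cdot\Big(1-\frac{\|x^*\|_1}{\beta}\Big)^2,$$ and $0<\theta\le1$.
   Context: A dictionary is a matrix $\Phi=[\varphi_1,\dots,\varphi_n]\in\mathbb{R}^{d\times n}$ whose columns (atoms) satisfy $\|\varphi_i\|_2=1$. Its coherence is $\mu=\max_{j\neq k}|\langle\varphi_j,\varphi_k\rangle|$, and its Babel function is $\mu_1(p)=\max_{|\Lambda|=p}\max_{i\notin\Lambda}\sum_{j\in\Lambda}|\langle\varphi_i,\varphi_j\rangle|$ for $p\ge1$, with $\mu_1(0)=0$. A signal $y\in\mathbb{R}^d$ is $m$-sparse if $y=\Phi x^*$ for some $x^*\in\mathbb{R}^n$ with at most $m$ nonzero entries; when $m<\tfrac12(\mu^{-1}+1)$ such an $x^*$ is unique. Problem (P$_\beta$): minimize $f(x)=\tfrac12\|y-\Phi x\|_2^2$ over $B_1(\beta)=\{x\in\mathbb{R}^n:\|x\|_1\le\beta\}$. Frank-Wolfe algorithm for (P$_\beta$): set $x_0=0$. For $k=0,1,2,\dots$: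 let $r_k=y-\Phi x_k$ (the residual); choose $i_k\in\arg\max_{i}|\langle\varphi_i,r_k\rangle|$ (any maximizer); set $s_k=\operatorname{sign}(\langle\varphi_{i_k},r_k\rangle)\,\beta\, e_{i_k}$ ($e_i$ the canonical basis vectors, $\operatorname{sign}(0)\in\{\pm1\}$ arbitrary); choose $\gamma_k\in\arg\min_{\gamma\in[0,1]}\|y-\Phi(x_k+\gamma(s_k-x_k))\|_2^2$; set $x_{k+1}=x_k+\gamma_k(s_k-x_k)$. *)

From HB Require Import structures.
From mathcomp Require Import all_boot all_order all_algebra.
Set Implicit Arguments. Unset Strict Implicit. Unset Printing Implicit Defensive.
Import Order.TTheory GRing.Theory Num.Theory.
Local Open Scope ring_scope.

Section Defs.
Variable R : archiRealFieldType.

Definition dot (d : nat) (u v : 'cV[R]_d) : R := \sum_(i < d) u i 0 * v i 0.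
Definition sqnorm (d : nat) (u : 'cV[R]_d) : R := dot u u.

Definition l1norm (n : nat) (x : 'cV[R]_n) : R := \sum_(i < n) `|x i 0|.
Definition l0norm (n : nat) (x : 'cV[R]_n) : nat := #|[set i | x i 0 != 0]|.

Definition atom (d n : nat) (Phi : 'M[R]_(d, n)) (j : 'I_n) : 'cV[R]_d := col j Phi.

Definition is_dictionary (d n : nat) (Phi : 'M[R]_(d, n)) : Prop :=
  forall j : 'I_n, sqnorm (atom Phi j) = 1.

Definition coherence (d n : nat) (Phi : 'M[R]_(d, n)) : R :=
  \big[Num.max/0]_(j < n) \big[Num.max/0]_(k < n | j != k)
     `|dot (atom Phi j) (atom Phi k)|.

(* Babel function mu_1(p) = max_{|L| = p} max_{i notin L} sum_{j in L} |<phi_i,phi_j>|.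
   (Maxima of nonnegative quantities, with empty max = 0; mu_1(0) = 0.) *)
Definition babel (d n : nat) (Phi : 'M[R]_(d, n)) (p : nat) : R :=
  \big[Num.max/0]_(L : {set 'I_n} | #|L| == p)
    \big[Num.max/0]_(i < n | i \notin L)
      \sum_(j in L) `|dot (atom Phi i) (atom Phi j)|.

Definition residual (d n : nat) (Phi : 'M[R]_(d, n)) (y : 'cV[R]_d) (x : 'cV[R]_n)
  : 'cV[R]_d := y - Phi *m x.

(* One Frank-Wolfe step for (P_beta) from xk to xk1, with arbitrary tie-breaking
   in the argmax, arbitrary sign(0) in {+1,-1}, and any exact line-search minimizer. *)
Definition FW_step (d n : nat) (Phi : 'M[R]_(d, n)) (y : 'cV[R]_d) (beta : R)
    (xk xk1 : 'cV[R]_n) : Prop :=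
  let r := residual Phi y xk in
  exists (i : 'I_n) (sg gamma : R),
    (forall j : 'I_n, `|dot (atom Phi j) r| <= `|dot (atom Phi i) r|) /\
    (sg = 1 \/ sg = -1) /\
    (0 < dot (atom Phi i) r -> sg = 1) /\
    (dot (atom Phi i) r < 0 -> sg = -1) /\
    let s : 'cV[R]_n := (sg * beta) *: delta_mx i 0 in
    0 <= gamma <= 1 /\
    (forall g : R, 0 <= g <= 1 ->
       sqnorm (y - Phi *m (xk + gamma *: (s - xk)))
       <= sqnorm (y - Phi *m (xk + g *: (s - xk)))) /\
    xk1 = xk + gamma *: (s - xk).

Definition FW_run (d n : nat) (Phi : 'M[R]_(d, n)) (y : 'cV[R]_d) (beta : R)
    (x : nat -> 'cV[R]_n) : Prop :=
  x 0%N = 0 /\ forall k : nat, FW_step Phi y beta (x k) (x k.+1).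

Definition theta (d n : nat) (Phi : 'M[R]_(d, n)) (m : nat) (xs : 'cV[R]_n) (beta : R) : R :=
  16^-1 * ((1 - babel Phi (m - 1)%N) / m%:R) * (1 - l1norm xs / beta) ^+ 2.

End Defs.

From HB Require Import structures.
From mathcomp Require Import all_boot all_order all_algebra.
From mathcomp Require Import ring lra.
Set Implicit Arguments. Unset Strict Implicit. Unset Printing Implicit Defensive.
Import Order.TTheory GRing.Theory Num.Theory.
Local Open Scope ring_scope.

(* Write r = y - Phi x = Phi (xs - x).  As long as r <> 0 the iterate x stays
   supported in the support S of xs: since (2m - 1) mu < 1, the atom best
   correlated with r lies in S (exact recovery condition), so the vertex s and
   hence x' stay supported in S.  For such x, with M = max_j |<phi_j, r>|,
     - the energy ||r||^2 = <r, Phi (xs - x)> is at most 2 m M^2;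
     - the gap G = <r, Phi (s - x)> is at least (beta - ||xs||_1) M + ||r||^2;
     - the curvature D = ||Phi (s - x)||^2 is at most (2 beta)^2.
   Exact line search then gives ||r'||^2 <= (1 - c) ||r||^2 with
   c = (1 - ||xs||_1 / beta)^2 / (16 m), already from the first iteration
   (K = 0), and theta = c (1 - mu_1(m - 1)) lies in (0, c] since
   0 <= mu_1(m - 1) <= (m - 1) mu <= 1/2. *)

Section FrankWolfeConvergence.
Variable R : archiRealFieldType.

Definition supported (n : nat) (S : {set 'I_n}) (v : 'cV[R]_n) : Prop :=
  forall j, j \notin S -> v j 0 = 0.

Lemma dotC d (u v : 'cV[R]_d) : dot u v = dot v u.
Proof. by apply: eq_bigr => i _; rewrite mulrC. Qed.

Lemma dotDr d (u v w : 'cV[R]_d) : dot u (v + w) = dot u v + dot u w.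
Proof. by rewrite /dot -big_split; apply: eq_bigr => i _; rewrite mxE mulrDr. Qed.

Lemma dotZr d (a : R) (u v : 'cV[R]_d) : dot u (a *: v) = a * dot u v.
Proof. by rewrite /dot mulr_sumr; apply: eq_bigr => i _; rewrite mxE mulrCA. Qed.

Lemma dotBr d (u v w : 'cV[R]_d) : dot u (v - w) = dot u v - dot u w.
Proof. by rewrite dotDr -scaleN1r dotZr mulN1r. Qed.

Lemma sqnorm_ge0 d (u : 'cV[R]_d) : 0 <= sqnorm u.
Proof. by apply: sumr_ge0 => i _; rewrite -expr2 sqr_ge0. Qed.

Lemma sqnormB d (r e : 'cV[R]_d) (g : R) :
  sqnorm (r - g *: e) = sqnorm r - 2 * g * dot r e + g ^+ 2 * sqnorm e.
Proof.
rewrite /sqnorm !dotBr !(dotC (r - g *: e)) !dotBr !dotZr !(dotC (g *: e)) !dotZr.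
ring.
Qed.

Lemma dot_mul d n (Phi : 'M[R]_(d, n)) (u : 'cV[R]_d) (v : 'cV[R]_n) :
  dot u (Phi *m v) = \sum_j dot (atom Phi j) u * v j 0.
Proof.
rewrite /dot; under eq_bigr do rewrite mxE mulr_sumr.
rewrite exchange_big /=; apply: eq_bigr => j _; rewrite mulr_suml.
by apply: eq_bigr => i _; rewrite /atom !mxE mulrA [u i 0 * _]mulrC.
Qed.

Lemma sqnorm_mul_le d n (Phi : 'M[R]_(d, n)) (v : 'cV[R]_n) :
  (forall j k, `|dot (atom Phi j) (atom Phi k)| <= 1) ->
  sqnorm (Phi *m v) <= l1norm v ^+ 2.
Proof.
move=> atom_le1.
have corr_le j : `|dot (atom Phi j) (Phi *m v)| <= l1norm v.
  rewrite dot_mul; apply: le_trans (ler_norm_sum _ _ _) _.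
  by apply: ler_sum => k _; rewrite normrM ler_piMl.
rewrite /sqnorm dot_mul; apply: le_trans (ler_norm _) _.
apply: le_trans (ler_norm_sum _ _ _) _.
apply: le_trans (_ : \sum_j l1norm v * `|v j 0| <= _).
  by apply: ler_sum => j _; rewrite normrM ler_wpM2r ?corr_le.
by rewrite -mulr_sumr expr2.
Qed.

Lemma l1norm_ge0 n (x : 'cV[R]_n) : 0 <= l1norm x.
Proof. exact: sumr_ge0. Qed.

Lemma l1norm_convex n (beta g : R) (x s : 'cV[R]_n) :
  0 <= g <= 1 -> l1norm x <= beta -> l1norm s <= beta ->
  l1norm (x + g *: (s - x)) <= beta.
Proof.
move=> /andP[g0 g1] Hx Hs.
apply: le_trans (_ : (1 - g) * l1norm x + g * l1norm s <= _); last by nra.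
rewrite /l1norm !mulr_sumr -big_split /=; apply: ler_sum => i _; rewrite !mxE.
have -> : x i 0 + g * (s i 0 - x i 0) = (1 - g) * x i 0 + g * s i 0 by ring.
apply: le_trans (ler_normD _ _) _.
by rewrite !normrM (ger0_norm g0) ger0_norm ?subr_ge0.
Qed.

Lemma l1norm_vertex n (beta sg : R) (i : 'I_n) :
  0 <= beta -> (sg = 1 \/ sg = -1) -> l1norm ((sg * beta) *: delta_mx i 0) = beta.
Proof.
move=> beta0 Hsg; rewrite /l1norm (bigD1 i) //= big1 => [|j ji]; rewrite !mxE.
  rewrite !eqxx mulr1 normrM (ger0_norm beta0) addr0.
  by case: Hsg => ->; rewrite ?normrN normr1 mul1r.
by rewrite (negbTE ji) mulr0 normr0.
Qed.

Lemma l1norm_triangle n (u v : 'cV[R]_n) : l1norm (u - v) <= l1norm u + l1norm v.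
Proof. by rewrite /l1norm -big_split; apply: ler_sum => j _; rewrite !mxE ler_normB. Qed.

Lemma bigmax_ge0 (I : finType) (P : pred I) (F : I -> R) :
  0 <= \big[Num.max/0]_(i | P i) F i.
Proof. by rewrite bigmax_idl le_max lexx. Qed.

Lemma bigmax_attained n (F : 'I_n -> R) :
  (forall i, 0 <= F i) ->
  0 < \big[Num.max/0]_i F i -> exists j, \big[Num.max/0]_i F i = F j.
Proof.
case: n F => [|n] F F0; first by rewrite big_ord0 ltxx.
move=> _; have [j _ ->] := @eq_bigmax _ _ _ 0 ord0 predT F isT (fun i _ => F0 i).
by exists j.
Qed.

Lemma bigmax_norm_gt0 n (v : 'cV[R]_n) : v != 0 -> 0 < \big[Num.max/0]_k `|v k 0|.
Proof.
apply: contraNT; rewrite -leNgt => v_le0; apply/eqP/matrixP => k j.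
rewrite ord1 mxE; apply/normr0_eq0/eqP; rewrite eq_le normr_ge0 andbT.
exact: le_trans (le_bigmax _ _ k) v_le0.
Qed.

Lemma sum_supported n (S : {set 'I_n}) (F : 'I_n -> R) :
  (forall k, k \notin S -> F k = 0) -> \sum_k F k = \sum_(k in S) F k.
Proof. by move=> F0; rewrite (bigID (mem S)) /= [X in _ + X]big1 ?addr0. Qed.

Lemma residual_line_search d n (Phi : 'M[R]_(d, n)) (y : 'cV[R]_d) (x s : 'cV[R]_n) gam :
  (forall g, 0 <= g <= 1 -> sqnorm (y - Phi *m (x + gam *: (s - x)))
                            <= sqnorm (y - Phi *m (x + g *: (s - x)))) ->
  forall g, 0 <= g <= 1 ->
  sqnorm (residual Phi y (x + gam *: (s - x))) <= sqnorm (residual Phi y x)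
    - 2 * g * dot (residual Phi y x) (Phi *m (s - x)) + g ^+ 2 * sqnorm (Phi *m (s - x)).
Proof.
move=> line_search g g01.
have step h : residual Phi y (x + h *: (s - x)) = residual Phi y x - h *: (Phi *m (s - x)).
  by rewrite /residual mulmxDr scalemxAr opprD addrA.
by rewrite -sqnormB -step; exact: line_search.
Qed.

(* Exact line search on g |-> N - 2 g G + g^2 D over [0,1] decreases N by any
   a <= G with a D <= G^2: take g = 1 if D <= G, and g = G / D otherwise. *)
Lemma line_search_decrease (N G D a v : R) :
  (forall g, 0 <= g <= 1 -> v <= N - 2 * g * G + g ^+ 2 * D) ->
  0 <= G -> a <= G -> a * D <= G ^+ 2 ->
  v <= N - a.
Proof.
move=> Hv G0 aG aD; have [DG|GD] := leP D G.
  by have := Hv 1; rewrite ler01 lexx mulr1 expr1n mul1r => /(_ isT); lra.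
have D0 : 0 < D by exact: le_lt_trans GD.
have g01 : 0 <= G / D <= 1 by rewrite divr_ge0 ?ler_pdivrMr ?mul1r ?(ltW D0) ?(ltW GD).
have := Hv _ g01.
have -> : N - 2 * (G / D) * G + (G / D) ^+ 2 * D = N - G ^+ 2 / D.
  by field; rewrite gt_eqF.
suff : a <= G ^+ 2 / D by lra.
by rewrite ler_pdivlMr.
Qed.

Lemma sign_choice_mul (sg p : R) :
  (sg = 1 \/ sg = -1) -> (0 < p -> sg = 1) -> (p < 0 -> sg = -1) -> sg * p = `|p|.
Proof.
case=> -> Hpos Hneg.
  have [/Hneg/eqP|p0] := ltP p 0; last by rewrite mul1r ger0_norm.
  by rewrite -subr_eq0 opprK (_ : 1 + 1 = 2%:R) // pnatr_eq0.
have [/Hpos/eqP|p0] := ltP 0 p; last by rewrite ler0_norm // mulN1r.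
by rewrite -subr_eq0 -opprD oppr_eq0 (_ : 1 + 1 = 2%:R) // pnatr_eq0.
Qed.

Section Coherence.
Variables (d n : nat) (Phi : 'M[R]_(d, n)) (m : nat).
Hypothesis Phi_dict : is_dictionary Phi.
Hypothesis m_ge1 : (1 <= m)%N.
Hypothesis coherence_small : ((2 * m)%:R - 1) * coherence Phi < 1.

Local Notation mu := (coherence Phi).
Local Notation mr := (m%:R : R).

Lemma mu_ge0 : 0 <= mu.
Proof. exact: bigmax_ge0. Qed.

Lemma mr_ge1 : 1 <= mr.
Proof. by rewrite ler1n. Qed.

Lemma coherence_small' : (2 * mr - 1) * mu < 1.
Proof. by rewrite -natrM. Qed.

Lemma coherence_half : (mr - 1) * mu <= 2^-1.
Proof. have := coherence_small'; have := mr_ge1; have := mu_ge0; nra. Qed.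

Lemma coherence_le j k : j != k -> `|dot (atom Phi j) (atom Phi k)| <= mu.
Proof.
move=> jk; apply: le_trans (le_bigmax _ _ j); exact: le_bigmax_cond.
Qed.

Lemma atom_dot_le1 j k : `|dot (atom Phi j) (atom Phi k)| <= 1.
Proof.
have [->|jk] := eqVneq j k; first by rewrite [dot _ _]Phi_dict normr1.
apply: le_trans (coherence_le jk) _.
have := coherence_small'; have := mr_ge1; have := mu_ge0; nra.
Qed.

Lemma babel_le : babel Phi (m - 1) <= (mr - 1) * mu.
Proof.
have H0 : 0 <= (mr - 1) * mu by rewrite mulr_ge0 ?subr_ge0 ?mr_ge1 ?mu_ge0.
apply: bigmax_le => // L /eqP cardL; apply: bigmax_le => // i iL.
apply: le_trans (_ : \sum_(j in L) mu <= _).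
  apply: ler_sum => j jL; apply: coherence_le.
  by apply: contraNneq iL => ->.
by rewrite sumr_const cardL -[mu *+ _]mulr_natr natrB // mulrC.
Qed.

Section SparseCorrelations.
Variable S : {set 'I_n}.
Hypothesis card_S : (#|S| <= m)%N.
Variable w : 'cV[R]_n.
Hypothesis w_supp : supported S w.

Local Notation corr j := (dot (atom Phi j) (Phi *m w)).
Local Notation W := (\big[Num.max/0]_k `|w k 0|).

Lemma entry_le_max k : `|w k 0| <= W.
Proof. exact: le_bigmax. Qed.

Lemma corr_expand j : corr j = \sum_(k in S) dot (atom Phi k) (atom Phi j) * w k 0.
Proof. by rewrite dot_mul; apply: sum_supported => k /w_supp ->; rewrite mulr0. Qed.

(* Off the support, atoms see Phi w only through cross-correlations. *)
Lemma corr_off_support j : j \notin S -> `|corr j| <= mu * W * mr.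
Proof.
move=> jS; rewrite corr_expand; apply: le_trans (ler_norm_sum _ _ _) _.
apply: le_trans (_ : \sum_(k in S) mu * W <= _).
  apply: ler_sum => k kS; rewrite normrM; apply: ler_pM => //; last exact: entry_le_max.
  by apply: coherence_le; apply: contraNneq jS => <-.
rewrite sumr_const -[_ *+ #|S|]mulr_natr ler_wpM2l ?ler_nat //.
by rewrite mulr_ge0 ?mu_ge0 ?bigmax_ge0.
Qed.

(* At an entry of maximal modulus the diagonal term dominates the cross terms. *)
Lemma corr_peak : 0 < W ->
  exists2 i0, i0 \in S & W * (1 - (mr - 1) * mu) <= `|corr i0|.
Proof.
move=> W_gt0; have [i0 Wi0] := bigmax_attained (fun k => normr_ge0 (w k 0)) W_gt0.
have i0S : i0 \in S.
  by apply: contraLR W_gt0 => /w_supp; rewrite Wi0 => ->; rewrite normr0 ltxx.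
exists i0 => //.
set T := \sum_(k in S | k != i0) (1 : R).
have T_le : 1 + T <= mr.
  have : \sum_(k in S) (1 : R) = #|S|%:R by rewrite sumr_const.
  by rewrite (bigD1 i0) //= -/T => ->; rewrite ler_nat.
have -> : corr i0 = w i0 0 + \sum_(k in S | k != i0) dot (atom Phi k) (atom Phi i0) * w k 0.
  by rewrite corr_expand (bigD1 i0) //= [dot _ _]Phi_dict mul1r.
apply: le_trans (lerB_normD _ _); rewrite -Wi0.
have rest_le : `|\sum_(k in S | k != i0) dot (atom Phi k) (atom Phi i0) * w k 0| <= mu * W * T.
  apply: le_trans (ler_norm_sum _ _ _) _; rewrite /T mulr_sumr.
  apply: ler_sum => k /andP[_ ki0]; rewrite mulr1 normrM.
  exact: ler_pM (normr_ge0 _) (normr_ge0 _) (coherence_le ki0) (entry_le_max k).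
have muW0 : 0 <= mu * W by rewrite mulr_ge0 ?mu_ge0 ?ltW.
have := ler_wpM2l muW0 (_ : T <= mr - 1); lra.
Qed.

Lemma corr_argmax_bound i : (forall j, `|corr j| <= `|corr i|) -> W <= 2 * `|corr i|.
Proof.
move=> imax; have [W_gt0|W_le0] := ltP 0 W; last by apply: le_trans W_le0 _; rewrite mulr_ge0.
have [i0 _ peak] := corr_peak W_gt0.
have := ler_wpM2l (ltW W_gt0) coherence_half; have := imax i0; nra.
Qed.

Lemma corr_argmax_in_support i :
  0 < W -> (forall j, `|corr j| <= `|corr i|) -> i \in S.
Proof.
move=> W_gt0 imax; apply/negPn/negP => iS.
have [i0 _ peak] := corr_peak W_gt0.
have := le_trans peak (le_trans (imax i0) (corr_off_support iS)).
have : 0 < W * (1 - (2 * mr - 1) * mu) by rewrite mulr_gt0 // subr_gt0 coherence_small'.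
lra.
Qed.

Lemma energy_bound i :
  (forall j, `|corr j| <= `|corr i|) -> sqnorm (Phi *m w) <= 2 * mr * `|corr i| ^+ 2.
Proof.
move=> imax; have W_le := corr_argmax_bound imax; set M := `|corr i| in imax W_le *.
rewrite /sqnorm dot_mul (sum_supported (S := S)); last by move=> k /w_supp ->; rewrite mulr0.
apply: le_trans (_ : \sum_(j in S) M * W <= _).
  apply: ler_sum => j _; apply: le_trans (ler_norm _) _; rewrite normrM.
  exact: ler_pM (imax j) (entry_le_max j).
rewrite sumr_const -[_ *+ #|S|]mulr_natr.
have S_le : #|S|%:R <= mr by rewrite ler_nat.
have M0 : 0 <= M := normr_ge0 _.
have W0 : 0 <= W := bigmax_ge0 _ _.
have := ler_wpM2l (mulr_ge0 M0 W0) S_le; have := ler_wpM2l M0 W_le.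
have := mr_ge1; nra.
Qed.

End SparseCorrelations.

Section FrankWolfe.
Variables (xs : 'cV[R]_n) (y : 'cV[R]_d) (beta : R).
Hypothesis y_def : y = Phi *m xs.
Hypothesis xs_sparse : (l0norm xs <= m)%N.
Hypothesis beta_gt0 : 0 < beta.
Hypothesis xs_inside : l1norm xs < beta.

Local Notation S := [set i | xs i 0 != 0].
Local Notation res v := (residual Phi y v).
Local Notation slack := (1 - l1norm xs / beta).

Definition fw_rate : R := slack ^+ 2 / (16 * mr).

Lemma slack_mul_beta : slack * beta = beta - l1norm xs.
Proof. by rewrite mulrBl mul1r divfK // gt_eqF. Qed.

Lemma slack_gt0 : 0 < slack.
Proof. by rewrite subr_gt0 ltr_pdivrMr // mul1r. Qed.

Lemma slack_le1 : slack <= 1.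
Proof. by rewrite lerBlDr lerDl divr_ge0 ?l1norm_ge0 ?ltW. Qed.

Lemma fw_rate_gt0 : 0 < fw_rate.
Proof. by rewrite divr_gt0 ?exprn_gt0 ?slack_gt0 // mulr_gt0 // (lt_le_trans ltr01 mr_ge1). Qed.

Lemma fw_rate_le1 : fw_rate <= 1.
Proof.
rewrite ler_pdivrMr ?mulr_gt0 ?(lt_le_trans ltr01 mr_ge1) // mul1r.
have := slack_gt0; have := slack_le1; have := mr_ge1; nra.
Qed.

Lemma fw_rate_scale M :
  fw_rate * (2 * mr * M ^+ 2) * (4 * beta ^+ 2) = (slack * beta * M) ^+ 2 / 2.
Proof. by rewrite /fw_rate; field; rewrite gt_eqF //= pnatr_eq0 -lt0n. Qed.

Lemma residual_diff x : res x = Phi *m (xs - x).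
Proof. by rewrite /residual y_def mulmxBr. Qed.

Lemma error_supported x : supported S x -> supported S (xs - x).
Proof.
move=> x_supp j jS; rewrite !mxE x_supp //.
by move: jS; rewrite inE negbK => /eqP ->; rewrite subrr.
Qed.

(* Lower bound on the Frank-Wolfe gap <r, Phi (s - x)>: the vertex s gains
   beta |<phi_i, r>| while xs can only gain ||xs||_1 |<phi_i, r>|. *)
Lemma fw_gap x i sg :
  (forall j, `|dot (atom Phi j) (res x)| <= `|dot (atom Phi i) (res x)|) ->
  sg * dot (atom Phi i) (res x) = `|dot (atom Phi i) (res x)| ->
  (beta - l1norm xs) * `|dot (atom Phi i) (res x)| + sqnorm (res x)
    <= dot (res x) (Phi *m ((sg * beta) *: delta_mx i 0 - x)).
Proof.
set r := res x; set M := `|dot (atom Phi i) r| => imax sgM.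
have -> : (sg * beta) *: delta_mx i 0 - x = (sg * beta) *: delta_mx i 0 - xs + (xs - x).
  by rewrite addrA subrK.
rewrite mulmxDr dotDr -residual_diff -/r mulmxBr dotBr !dot_mul.
have -> : \sum_j dot (atom Phi j) r * ((sg * beta) *: delta_mx i 0 : 'cV_n) j 0 = beta * M.
  rewrite (bigD1 i) //= big1 ?addr0 => [|j ji]; last by rewrite !mxE (negbTE ji) !mulr0.
  by rewrite !mxE !eqxx mulr1 -sgM; ring.
have : \sum_j dot (atom Phi j) r * xs j 0 <= M * l1norm xs.
  rewrite /l1norm mulr_sumr; apply: ler_sum => j _.
  by apply: le_trans (ler_norm _) _; rewrite normrM ler_wpM2r.
rewrite /sqnorm; lra.
Qed.

Lemma fw_step_feasible x x' :
  l1norm x <= beta -> FW_step Phi y beta x x' -> l1norm x' <= beta.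
Proof.
move=> x_in [i [sg [gam [_ [sg_pm [_ [_ [gam01 [_ ->]]]]]]]]].
by apply: l1norm_convex; rewrite ?l1norm_vertex ?lexx ?(ltW beta_gt0).
Qed.

(* A zero residual stays zero (step 0 is admissible in the line search). *)
Lemma fw_step_zero_residual x x' :
  sqnorm (res x) = 0 -> FW_step Phi y beta x x' -> sqnorm (res x') = 0.
Proof.
move=> r0 [i [sg [gam [_ [_ [_ [_ [_ [line_search ->]]]]]]]]].
apply/eqP; rewrite eq_le sqnorm_ge0 andbT.
apply: le_trans (line_search 0 _) _; first by rewrite lexx ler01.
by move: r0; rewrite /residual scale0r addr0 => ->.
Qed.

(* With a nonzero residual the selected atom lies in S, so x stays supported in S. *)
Lemma fw_step_support x x' :
  supported S x -> sqnorm (res x) != 0 -> FW_step Phi y beta x x' -> supported S x'.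
Proof.
move=> x_supp r_ne0 [i [sg [gam [imax [_ [_ [_ [_ [_ ->]]]]]]]]] j jS.
have err_ne0 : xs - x != 0.
  apply: contraNneq r_ne0 => err0; apply/eqP.
  by rewrite residual_diff err0 mulmx0 /sqnorm /dot big1 // => k _; rewrite mxE mul0r.
have iS : i \in S.
  apply: (corr_argmax_in_support xs_sparse (error_supported x_supp) (bigmax_norm_gt0 err_ne0)).
  by rewrite -residual_diff.
have ji : (j == i) = false by apply: contraNF jS => /eqP ->.
by rewrite !mxE x_supp // ji mulr0 subrr mulr0 addr0.
Qed.

Lemma fw_step_contraction x x' :
  l1norm x <= beta -> supported S x -> FW_step Phi y beta x x' ->
  sqnorm (res x') <= (1 - fw_rate) * sqnorm (res x).
Proof.
move=> x_in x_supp [i [sg [gam [imax [sg_pm [sg_pos [sg_neg [_ [line_search ->]]]]]]]]].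
set s := (sg * beta) *: delta_mx i 0 in line_search *.
have gap := fw_gap imax (sign_choice_mul sg_pm sg_pos sg_neg).
have energy : sqnorm (res x) <= 2 * mr * `|dot (atom Phi i) (res x)| ^+ 2.
  have imax' : forall j, `|dot (atom Phi j) (Phi *m (xs - x))|
                         <= `|dot (atom Phi i) (Phi *m (xs - x))| by rewrite -residual_diff.
  by have := energy_bound xs_sparse (error_supported x_supp) imax'; rewrite -residual_diff.
have direction : sqnorm (Phi *m (s - x)) <= 4 * beta ^+ 2.
  apply: le_trans (sqnorm_mul_le _ atom_dot_le1) _.
  have := l1norm_triangle s x; rewrite l1norm_vertex ?(ltW beta_gt0) // => sx_le.
  have := l1norm_ge0 (s - x); nra.
set N := sqnorm (res x) in gap energy *.
set G := dot (res x) (Phi *m (s - x)) in gap.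
set D := sqnorm (Phi *m (s - x)) in direction.
set M := `|dot (atom Phi i) (res x)| in gap energy.
have N0 : 0 <= N := sqnorm_ge0 _.
have M0 : 0 <= M := normr_ge0 _.
have rate0 := ltW fw_rate_gt0; have rate1 := fw_rate_le1.
have gapM0 : 0 <= (beta - l1norm xs) * M by rewrite mulr_ge0 // subr_ge0 ltW.
have sbM0 : 0 <= slack * beta * M by rewrite slack_mul_beta.
have sbM_le : slack * beta * M <= G by rewrite slack_mul_beta; lra.
rewrite mulrBl mul1r.
apply: (line_search_decrease (G := G) (D := D) (residual_line_search line_search)).
- lra.
- have := ler_piMl N0 rate1; lra.
apply: le_trans (_ : fw_rate * (2 * mr * M ^+ 2) * (4 * beta ^+ 2) <= _).
  by apply: ler_pM; [exact: mulr_ge0|exact: sqnorm_ge0|exact: ler_wpM2l|].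
rewrite fw_rate_scale; have := ler_pM sbM0 sbM0 sbM_le sbM_le.
rewrite -!expr2; have := sqr_ge0 (slack * beta * M); lra.
Qed.

Definition fw_invariant (x : 'cV[R]_n) : Prop :=
  l1norm x <= beta /\ (sqnorm (res x) = 0 \/ supported S x).

Lemma fw_step_invariant x x' :
  fw_invariant x -> FW_step Phi y beta x x' -> fw_invariant x'.
Proof.
move=> [x_in x_supp] step; split; first exact: fw_step_feasible step.
have [r0|r_ne0] := eqVneq (sqnorm (res x)) 0; first by left; exact: fw_step_zero_residual step.
right; case: x_supp => [r0|x_supp]; first by rewrite r0 eqxx in r_ne0.
exact: fw_step_support step.
Qed.

Lemma fw_run_invariant x : FW_run Phi y beta x -> forall k, fw_invariant (x k).
Proof.
move=> [x0 steps]; elim=> [|k IH]; last exact: fw_step_invariant IH (steps k).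
rewrite x0; split; last by right => j _; rewrite mxE.
by rewrite /l1norm big1 ?ltW // => j _; rewrite mxE normr0.
Qed.

Lemma fw_step_decrease x x' :
  fw_invariant x -> FW_step Phi y beta x x' ->
  sqnorm (res x') <= (1 - fw_rate) * sqnorm (res x).
Proof.
move=> [x_in [r0|x_supp]] step; last exact: fw_step_contraction step.
by rewrite (fw_step_zero_residual r0 step) r0 mulr0.
Qed.

(* theta = fw_rate (1 - mu_1(m - 1)) with 0 <= mu_1(m - 1) <= 1/2. *)
Lemma theta_bounds : 0 < theta Phi m xs beta <= fw_rate.
Proof.
have -> : theta Phi m xs beta = fw_rate * (1 - babel Phi (m - 1)).
  by rewrite /theta /fw_rate; field; rewrite pnatr_eq0 -lt0n m_ge1 gt_eqF.
have := babel_le; have := coherence_half; have := bigmax_ge0 _ _ : 0 <= babel Phi (m - 1).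
have := fw_rate_gt0; nra.
Qed.

End FrankWolfe.

End Coherence.

End FrankWolfeConvergence.

Theorem theorem2 (R : archiRealFieldType) (d n : nat) (Phi : 'M[R]_(d, n))
    (m : nat) (xs : 'cV[R]_n) (y : 'cV[R]_d) (beta : R) (x : nat -> 'cV[R]_n) :
  is_dictionary Phi ->
  (1 <= m)%N ->
  ((2 * m)%:R - 1) * coherence Phi < 1 ->
  y = Phi *m xs ->
  (l0norm xs <= m)%N ->
  0 < beta ->
  l1norm xs < beta ->
  FW_run Phi y beta x ->
  (exists K : nat, forall k : nat, (K <= k)%N ->
     sqnorm (residual Phi y (x k.+1))
       <= (1 - theta Phi m xs beta) * sqnorm (residual Phi y (x k))) /\
  0 < theta Phi m xs beta <= 1.
Proof.
move=> dict m_ge1 coh y_def sparse beta_gt0 xs_inside run.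
have /andP[theta_gt0 theta_le] := theta_bounds m_ge1 coh beta_gt0 xs_inside.
split; last by rewrite theta_gt0 (le_trans theta_le) ?fw_rate_le1.
exists 0%N => k _.
have inv := fw_run_invariant dict coh y_def sparse beta_gt0 run k.
apply: le_trans (fw_step_decrease dict m_ge1 coh y_def sparse beta_gt0 xs_inside inv (run.2 k)) _.
by rewrite ler_wpM2r ?sqnorm_ge0 ?lerB.
Qed.
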